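(* The $K$-bilinear map $\psi:\mathfrak{stl}_3(R)\times\mathfrak{stl}_3(R)\to\mathcal U$ defined below is a Leibniz $2$-cocycle, i.e. $\psi(x,[y,z])+\psi([x,z],y)-\psi([x,y],z)=0$ for all $x,y,z\in\mathfrak{stl}_3(R)$.
   Context: $K$ unital commutative ring, $R$ unital associative $K$-algebra, free as $K$-module with basis containing $1$. Leibniz algebra: $K$-bilinear bracket with $[x,[y,z]]=[[x,y],z]-[[x,z],y]$. $\mathfrak{stl}_3(R)$: Leibniz algebra over $K$ generated by $X_{ij}(a)$, $a\in R$, $1\le i\ne j\le 3$, subject to $K$-linearity in $a$, $[X_{ij}(a),X_{jk}(b)]=X_{ik}(ab)$ and $[X_{ij}(a),X_{ki}(b)]=-X_{kj}(ba)$ for distinct $i,j,k$, $[X_{ij}(a),X_{kl}(b)]=0$ for $j\ne k$, $i\ne l$. $H$ is the $K$-span of all $[X_{ij}(a),X_{ji}(b)]$; $\mathfrak{stl}_3(R)=H\oplus\bigoplus_{i\ne j}X_{ij}(R)$ with $a\mapsto X_{ij}(a)$ injective. $R_3=R/\mathcal I_3$ with $\mathcal I_3=3R+R[R,R]$ the ideal generated by all $3a$ and $ab-ba$; $\bar a$ the class of $a$. $\mathcal U=R_3^6$ with coordinates indexed by $\{1,2,3,-1,-2,-3\}$; $\bar a^{(m)}$ denotes the element with coordinate $\bar a$ at index $m$ and $0$ elsewhere. For $m\ne n$ in $\{1,2,3\}$, $\mathrm{sign}(m,n)=1$ if $m<n$ and $-1$ if $m>n$. $\psi$ is the $K$-bilinear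 map with $\psi(X_{ij}(a),X_{ik}(b))=\mathrm{sign}(j,k)\,(\overline{ab})^{(i)}$ and $\psi(X_{ij}(a),X_{kj}(b))=\mathrm{sign}(i,k)\,(\overline{ab})^{(-j)}$ for $a,b\in R$ and distinct $i,j,k$, $\psi=0$ on all other pairs $X_{ij}(a),X_{kl}(b)$, and $\psi=0$ whenever an argument lies in $H$. *)

From HB Require Import structures.
From mathcomp Require Import all_boot all_order all_algebra.
Set Implicit Arguments. Unset Strict Implicit. Unset Printing Implicit Defensive.
Import GRing.Theory.
Local Open Scope ring_scope.

(* Indices 1,2,3 of the paper are represented by the ordinals 0,1,2 of 'I_3
   (order-preservingly). *)

Section Defs.
Variable K : comNzRingType.

Definition free_with_basis_containing_one (R : algType K) : Prop :=
  exists (I : eqType) (b : I -> R) (i1 : I),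
    b i1 = 1 /\
    (forall r : R, exists s : seq (K * I), r = \sum_(t <- s) t.1 *: b t.2) /\
    (forall (s : seq I) (c : I -> K), uniq s ->
        \sum_(i <- s) c i *: b i = 0 -> forall i, i \in s -> c i = 0).

Inductive I3 (R : algType K) : R -> Prop :=
  | I3_three a : I3 (a *+ 3)
  | I3_comm a b : I3 (a * b - b * a)
  | I3_zero : I3 0
  | I3_add x y : I3 x -> I3 y -> I3 (x + y)
  | I3_mull r x : I3 x -> I3 (r * x)
  | I3_mulr r x : I3 x -> I3 (x * r).

Definition leibniz (L : lmodType K) (br : L -> L -> L) : Prop :=
  [/\ (forall x (k : K) u v, br x (k *: u + v) = k *: br x u + br x v),
      (forall y (k : K) u v, br (k *: u + v) y = k *: br u y + br v y) &
      (forall x y z, br x (br y z) = br (br x y) z - br (br x z) y)].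

Definition stl3_relations (R : algType K) (L : lmodType K) (br : L -> L -> L)
    (X : 'I_3 -> 'I_3 -> R -> L) : Prop :=
  [/\ (forall i j, i != j -> forall (k : K) a b,
          X i j (k *: a + b) = k *: X i j a + X i j b),
      (forall i j k, i != j -> j != k -> i != k -> forall a b,
          br (X i j a) (X j k b) = X i k (a * b)),
      (forall i j k, i != j -> j != k -> i != k -> forall a b,
          br (X i j a) (X k i b) = - X k j (b * a)) &
      (forall i j k l, i != j -> k != l -> j != k -> i != l -> forall a b,
          br (X i j a) (X k l b) = 0)].

(* (L, br, X) is stl_3(R): the Leibniz algebra over K generated by the X_ij(a)
   subject to the relations above (universal property of the presentation). *)
Definition is_stl3 (R : algType K) (L : lmodType K) (br : L -> L -> L)
    (X : 'I_3 -> 'I_3 -> R -> L) : Prop :=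
  [/\ leibniz br, stl3_relations br X &
      forall (L' : lmodType K) (br' : L' -> L' -> L')
             (Y : 'I_3 -> 'I_3 -> R -> L'),
        leibniz br' -> stl3_relations br' Y ->
        exists f : L -> L',
          [/\ (forall (k : K) u v, f (k *: u + v) = k *: f u + f v),
              (forall x y, f (br x y) = br' (f x) (f y)),
              (forall i j a, i != j -> f (X i j a) = Y i j a) &
              (forall g : L -> L',
                 (forall (k : K) u v, g (k *: u + v) = k *: g u + g v) ->
                 (forall x y, g (br x y) = br' (g x) (g y)) ->
                 (forall i j a, i != j -> g (X i j a) = Y i j a) ->
                 forall x, g x = f x)]].

Inductive inH (R : algType K) (L : lmodType K) (br : L -> L -> L)
    (X : 'I_3 -> 'I_3 -> R -> L) : L -> Prop :=
  | inH_gen i j a b : i != j -> inH br X (br (X i j a) (X j i b))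
  | inH_zero : inH br X 0
  | inH_add x y : inH br X x -> inH br X y -> inH br X (x + y)
  | inH_scale (k : K) x : inH br X x -> inH br X (k *: x).

Definition stl3_decomposition (R : algType K) (L : lmodType K)
    (br : L -> L -> L) (X : 'I_3 -> 'I_3 -> R -> L) : Prop :=
  (forall x : L, exists (h : L) (a : 'I_3 -> 'I_3 -> R),
      inH br X h /\ x = h + \sum_(i < 3) \sum_(j < 3 | i != j) X i j (a i j)) /\
  (forall (h : L) (a : 'I_3 -> 'I_3 -> R), inH br X h ->
      h + \sum_(i < 3) \sum_(j < 3 | i != j) X i j (a i j) = 0 ->
      h = 0 /\ forall i j, i != j -> a i j = 0).

(* (R3, bar) is R_3 = R / I_3 with the canonical projection a |-> \bar a
   (as K-modules: bar is K-linear, surjective, with kernel exactly I_3). *)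
Definition is_R3_quotient (R : algType K) (R3 : lmodType K) (bar : R -> R3)
    : Prop :=
  [/\ (forall (k : K) a b, bar (k *: a + b) = k *: bar a + bar b),
      (forall u : R3, exists a, bar a = u) &
      (forall a, bar a = 0 <-> I3 a)].
End Defs.

(* Index set {1,2,3,-1,-2,-3} of U = R_3^6: inl i stands for i+1 and
   inr i for -(i+1), for i : 'I_3. *)
Definition U_index := ('I_3 + 'I_3)%type.

Definition ucoord (M : zmodType) (m : U_index) (u : M) : {ffun U_index -> M} :=
  [ffun n => if n == m then u else 0].

Definition signed (M : zmodType) (m n : 'I_3) (u : M) : M :=
  if (m < n)%N then u else - u.

Definition psi_gen (R : nzRingType) (M : zmodType) (bar : R -> M)
    (i j k l : 'I_3) (a b : R) : {ffun U_index -> M} :=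
  if (i == k) && (j != l) then signed j l (ucoord (inl i) (bar (a * b)))
  else if (j == l) && (i != k) then signed i k (ucoord (inr j) (bar (a * b)))
  else 0.

From HB Require Import structures.
From mathcomp Require Import all_boot all_order all_algebra.
Import GRing.Theory.
Local Open Scope ring_scope.
Set Implicit Arguments. Unset Strict Implicit. Unset Printing Implicit Defensive.

(** By trilinearity and the decomposition stl_3(R) = H (+) (+)_{i<>j} X_ij(R),
    it suffices to check the identity when every argument is a root generator
    X_ij(a) or a generator [X_ij(a), X_ji(b)] of H.  Since R_3 is commutative,
    the class of a product of three or four elements does not depend on the
    order of the factors; hence on three root generators each term of the
    identity is an integer multiple, fixed by the indices alone, of the class
    of abc, and the identity amounts to the divisibility by 3 of an integer
    coefficient, which is decided by computation over all index patterns.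
    With one argument h in H it reduces to psi([h,z],y) = psi([h,y],z), which
    follows in the same way from the explicit action of H on root generators;
    with two arguments in H every term vanishes because [H,H] lies in H. *)

Section LinearFacts.
Variables (K : pzRingType) (U V : lmodType K) (f : U -> V).
Hypothesis f_lin : linear f.

Lemma linB u v : f (u - v) = f u - f v.
Proof. exact: (GRing.zmod_morphism_linear f_lin). Qed.
Lemma lin0 : f 0 = 0.
Proof. by rewrite -(subrr (0 : U)) linB; apply: subrr. Qed.
Lemma linN u : f (- u) = - f u.
Proof. by rewrite -[- u]sub0r linB lin0 sub0r. Qed.
Lemma linD u v : f (u + v) = f u + f v.
Proof. by rewrite -{1}[v]opprK linB linN opprK. Qed.
Lemma linZ k u : f (k *: u) = k *: f u.
Proof. by rewrite -[k *: u]addr0 f_lin lin0 addr0. Qed.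
Lemma linear_add_sub (g h : U -> V) :
  linear g -> linear h -> linear (fun u => f u + g u - h u).
Proof.
move=> g_lin h_lin k u v; rewrite f_lin g_lin h_lin scalerBr scalerDr opprD.
by rewrite [k *: f u + _ + (_ + _)]addrACA [_ + _ + (- _ - _)]addrACA.
Qed.
Lemma linMn u n : f (u *+ n) = f u *+ n.
Proof. by elim: n => [|n IHn]; rewrite ?mulr0n ?lin0 // !mulrS linD IHn. Qed.
End LinearFacts.

Lemma ord3_cases (i : 'I_3) :
  [\/ i = Ordinal (isT : 0 < 3), i = Ordinal (isT : 1 < 3) | i = Ordinal (isT : 2 < 3)]%N.
Proof.
case: i => [[|[|[|m]]] lt_i3] //.
- by constructor 1; apply: val_inj.
- by constructor 2; apply: val_inj.
- by constructor 3; apply: val_inj.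
Qed.

Ltac case_ord3 i := case: (ord3_cases i) => ->.

Definition sign3 (m n : 'I_3) : int := if (m < n)%N then 1 else -1.

Lemma sign3_anti m n : m != n -> sign3 m n = - sign3 n m.
Proof.
rewrite /sign3 => nmn; case: ltngtP => [_|_|/val_inj eq_mn]; rewrite ?opprK //.
by rewrite eq_mn eqxx in nmn.
Qed.

(* Integer shadows of psi and of the bracket on root generators:
   psi_gen bar i j k l a b is bar (a * b) times psi_coef i j k l (psi_genE), and
   [X_ij a, X_kl b] is br_sign i j k l times X_pq (a * b) or X_pq (b * a), with
   (p, q) = (br_row i j k l, br_col i j k l); the sign is 0 also when the
   bracket lies in H, where psi vanishes. *)
Definition psi_coef (i j k l : 'I_3) (t : U_index) : int :=
  if (i == k) && (j != l) then (t == inl i)%:Z * sign3 j l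
  else if (j == l) && (i != k) then (t == inr j)%:Z * sign3 i k
  else 0.

Lemma psi_coef_anti i j k l t : psi_coef i j k l t = - psi_coef k l i j t.
Proof.
rewrite /psi_coef ![k == i]eq_sym ![l == j]eq_sym.
case: (eqVneq i k) => [<-|nik]; case: (eqVneq j l) => [<-|njl] /=; rewrite ?oppr0 //.
  by rewrite (sign3_anti njl) mulrN.
by rewrite (sign3_anti nik) mulrN.
Qed.

Definition br_sign (i j k l : 'I_3) : int :=
  if j == k then (i != l)%:Z else - (i == l)%:Z.
Definition br_row (i j k l : 'I_3) := if j == k then i else k.
Definition br_col (i j k l : 'I_3) := if j == k then l else j.

Definition dpsi_root_coef (i j k l m n : 'I_3) (t : U_index) : int :=
  br_sign k l m n * psi_coef i j (br_row k l m n) (br_col k l m n) t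
  + br_sign i j m n * psi_coef (br_row i j m n) (br_col i j m n) k l t
  - br_sign i j k l * psi_coef (br_row i j k l) (br_col i j k l) m n t.

Definition hact_coef (i j k l : 'I_3) : int :=
  (k == i)%:Z - (k == j)%:Z - (l == i)%:Z + (l == j)%:Z.

Definition hinv_coef (i j k l m n : 'I_3) (t : U_index) : int :=
  hact_coef i j m n * psi_coef m n k l t - hact_coef i j k l * psi_coef k l m n t.

(* The finite-type quantifiers [forall i, _] do not reduce (the cardinal is
   locked), so index patterns are enumerated through an explicit list. *)
Definition ords3 : seq 'I_3 :=
  [:: Ordinal (isT : 0 < 3); Ordinal (isT : 1 < 3); Ordinal (isT : 2 < 3)]%N.
Definition all3 (P : 'I_3 -> bool) := all P ords3.

Definition dvd3_on_roots
    (c : 'I_3 -> 'I_3 -> 'I_3 -> 'I_3 -> 'I_3 -> 'I_3 -> U_index -> int) :=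
  all3 (fun i => all3 (fun j => all3 (fun k => all3 (fun l => all3 (fun m => all3 (fun n =>
    [==> i != j, k != l, m != n =>
      all3 (fun t => 3 %| c i j k l m n (inl t)) &&
      all3 (fun t => 3 %| c i j k l m n (inr t))]%Z)))))).

Lemma all3P (P : 'I_3 -> bool) : all3 P -> forall i, P i.
Proof. by move/allP=> P_all i; apply: P_all; case_ord3 i. Qed.

Lemma third_index (i j : 'I_3) : i != j -> exists2 m : 'I_3, m != i & m != j.
Proof.
move=> nij; exists (nth ord0 ords3 (3 - i - j));
  by move: nij; case_ord3 i; case_ord3 j.
Qed.

Lemma dvd3_on_rootsP c : dvd3_on_roots c ->
  forall i j k l m n t, i != j -> k != l -> m != n -> (3 %| c i j k l m n t)%Z.
Proof.
move=> c_dvd3 i j k l m n t nij nkl nmn.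
move: c_dvd3 => /all3P/(_ i)/all3P/(_ j)/all3P/(_ k)/all3P/(_ l)/all3P/(_ m)/all3P/(_ n).
by rewrite nij nkl nmn /= => /andP[/all3P dvd_l /all3P dvd_r]; case: t.
Qed.

Lemma dpsi_root_coef_dvd3 i j k l m n t : i != j -> k != l -> m != n ->
  (3 %| dpsi_root_coef i j k l m n t)%Z.
Proof. by apply: dvd3_on_rootsP; vm_compute. Qed.

Lemma hinv_coef_dvd3 i j k l m n t : i != j -> k != l -> m != n ->
  (3 %| hinv_coef i j k l m n t)%Z.
Proof. by apply: dvd3_on_rootsP; vm_compute. Qed.

Section CocycleIdentity.
Variables (K : comNzRingType) (R : algType K) (L : lmodType K) (br : L -> L -> L)
  (X : 'I_3 -> 'I_3 -> R -> L) (R3 : lmodType K) (bar : R -> R3)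
  (psi : L -> L -> {ffun U_index -> R3}).
Hypotheses (br_leibniz : leibniz br) (X_rel : stl3_relations br X)
  (X_decomp : stl3_decomposition br X) (bar_quotient : is_R3_quotient bar).
Hypotheses (psi_linr : forall x, linear (psi x)) (psi_linl : forall y, linear (psi^~ y)).
Hypothesis psi_XX : forall i j k l a b, i != j -> k != l ->
  psi (X i j a) (X k l b) = psi_gen bar i j k l a b.
Hypotheses (psi_Hl : forall h y, inH br X h -> psi h y = 0)
  (psi_Hr : forall x h, inH br X h -> psi x h = 0).

Lemma br_linr x : linear (br x). Proof. by case: br_leibniz => br_r _ _; apply: br_r. Qed.
Lemma br_linl y : linear (br^~ y). Proof. by case: br_leibniz => _ br_l _; apply: br_l. Qed.

Lemma br_leibnizr x y z : br x (br y z) = br (br x y) z - br (br x z) y.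
Proof. by case: br_leibniz. Qed.
Lemma br_leibnizl x y z : br (br x y) z = br x (br y z) + br (br x z) y.
Proof. by rewrite br_leibnizr subrK. Qed.

Lemma X_lin i j : i != j -> linear (X i j).
Proof. by case: X_rel => X_l _ _ _; apply: X_l. Qed.

Definition brX i j k l a b : L :=
  if j == k then (if i == l then br (X i j a) (X k l b) else X i l (a * b))
  else if i == l then - X k j (b * a) else 0.

Lemma br_XX i j k l a b : i != j -> k != l -> br (X i j a) (X k l b) = brX i j k l a b.
Proof.
case: X_rel => _ X_mul X_mulN X_0; rewrite /brX.
case: (eqVneq j k) => [<-|njk]; case: (eqVneq i l) => [<-|nil] nij nkl //.
- exact: X_mul.
- by apply: X_mulN; rewrite // eq_sym.
- exact: X_0.
Qed.

Lemma bar_lin : linear bar. Proof. by case: bar_quotient. Qed.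

Lemma bar_I3 a : I3 a -> bar a = 0. Proof. by case: bar_quotient => _ _ /(_ a) []. Qed.

Lemma bar_mulz3 a n : (3 %| n)%Z -> bar a *~ n = 0.
Proof.
case/dvdzP=> q ->; rewrite mulrzA mulrzAC -pmulrn -(linMn bar_lin).
by rewrite bar_I3 ?mul0rz //; apply: I3_three.
Qed.

Lemma bar_mul_swap p x y q : bar (p * x * y * q) = bar (p * y * x * q).
Proof.
apply/eqP; rewrite -subr_eq0 -(linB bar_lin) bar_I3 //.
have -> : p * x * y * q - p * y * x * q = p * (x * y - y * x) * q.
  by rewrite mulrBr mulrBl !mulrA.
exact/I3_mulr/I3_mull/I3_comm.
Qed.

Lemma bar_mulC x y : bar (x * y) = bar (y * x).
Proof. by have := bar_mul_swap 1 x y 1; rewrite !mul1r !mulr1. Qed.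

Lemma bar_mulCl x y z : bar (x * y * z) = bar (y * x * z).
Proof. by have := bar_mul_swap 1 x y z; rewrite !mul1r. Qed.

Lemma bar_mul_swap12 x y z w : bar (x * y * z * w) = bar (y * x * z * w).
Proof. by have := bar_mulCl x y (z * w); rewrite !mulrA. Qed.

Lemma bar_mulAC p x y : bar (p * x * y) = bar (p * y * x).
Proof. by have := bar_mul_swap p x y 1; rewrite !mulr1. Qed.

Lemma psi_genE i j k l a b :
  psi_gen bar i j k l a b = [ffun t => bar (a * b) *~ psi_coef i j k l t].
Proof.
apply/ffunP => t; rewrite /psi_gen /psi_coef /signed /sign3 /ucoord !ffunE.
case: ifP => _; [|case: ifP => _]; last by rewrite ffunE mulr0z.
all: by case: (_ < _)%N; rewrite ?ffunE; case: (t == _);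
  rewrite ?mul1r ?mul0r ?mulr1z ?mulrN1z ?mulr0z ?oppr0.
Qed.

Lemma psi_XXE i j k l a b : i != j -> k != l ->
  psi (X i j a) (X k l b) = [ffun t => bar (a * b) *~ psi_coef i j k l t].
Proof. by move=> nij nkl; rewrite psi_XX // psi_genE. Qed.

Lemma psi_XX_anti i j k l a b : i != j -> k != l ->
  psi (X i j a) (X k l b) = - psi (X k l b) (X i j a).
Proof.
move=> nij nkl; rewrite !psi_XXE // bar_mulC; apply/ffunP => t.
by rewrite !ffunE psi_coef_anti mulrNz.
Qed.

Lemma psi_br_l i j k l m n a b c : i != j -> k != l -> m != n ->
  psi (br (X i j a) (X k l b)) (X m n c) = [ffun t => bar (a * b * c) *~
    (br_sign i j k l * psi_coef (br_row i j k l) (br_col i j k l) m n t)].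
Proof.
move=> nij nkl nmn; rewrite br_XX // /brX /br_sign /br_row /br_col.
case: (eqVneq j k) => [ejk|njk]; case: (eqVneq i l) => [eil|nil] /=.
- rewrite psi_Hl; last by rewrite -ejk eil; apply: inH_gen; rewrite -eil.
  by apply/ffunP => t; rewrite !ffunE mul0r mulr0z.
- by rewrite psi_XXE //; apply/ffunP => t; rewrite !ffunE mul1r.
- rewrite (linN (psi_linl _)) psi_XXE ?[k == j]eq_sym // bar_mulCl.
  by apply/ffunP => t; rewrite !ffunE mulN1r mulrNz.
- by rewrite (lin0 (psi_linl _)); apply/ffunP => t; rewrite !ffunE mul0r mulr0z.
Qed.

Lemma psi_br_r i j k l m n a b c : i != j -> k != l -> m != n ->
  psi (X i j a) (br (X k l b) (X m n c)) = [ffun t => bar (a * b * c) *~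
    (br_sign k l m n * psi_coef i j (br_row k l m n) (br_col k l m n) t)].
Proof.
move=> nij nkl nmn; rewrite br_XX // /brX /br_sign /br_row /br_col.
case: (eqVneq l m) => [elm|nlm]; case: (eqVneq k n) => [ekn|nkn] /=.
- rewrite psi_Hr; last by rewrite -elm ekn; apply: inH_gen; rewrite -ekn.
  by apply/ffunP => t; rewrite !ffunE mul0r mulr0z.
- by rewrite psi_XXE // mulrA; apply/ffunP => t; rewrite !ffunE mul1r.
- rewrite (linN (psi_linr _)) psi_XXE ?[m == l]eq_sym // mulrA bar_mulAC.
  by apply/ffunP => t; rewrite !ffunE mulN1r mulrNz.
- by rewrite (lin0 (psi_linr _)); apply/ffunP => t; rewrite !ffunE mul0r mulr0z.
Qed.

Definition dpsi x y z := psi x (br y z) + psi (br x z) y - psi (br x y) z.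

Lemma dpsi_XXX i j k l m n a b c : i != j -> k != l -> m != n ->
  dpsi (X i j a) (X k l b) (X m n c) = 0.
Proof.
move=> nij nkl nmn; rewrite /dpsi psi_br_r // !psi_br_l // [bar (a * c * b)]bar_mulAC.
apply/ffunP => t; rewrite !ffunE -mulrzDr -mulrzBr.
exact/bar_mulz3/dpsi_root_coef_dvd3.
Qed.

Definition hact i j a b (k l : 'I_3) c : R :=
  a * b * c *+ (k == i) - b * a * c *+ (k == j)
  - c * a * b *+ (l == i) + c * b * a *+ (l == j).

Ltac norm_X :=
  rewrite /hact /= ?mulr1 ?mulr1n ?mulr0n ?subr0 ?sub0r ?addr0 ?add0r ?opprD ?opprK ?mulrA;
  rewrite ?(linD (X_lin _)) ?(linB (X_lin _)) ?(linN (X_lin _)) ?(lin0 (X_lin _)) //;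
  rewrite ?mulrN ?mulNr ?mulrA ?mulr1 ?(linN (X_lin _)) ?opprK //.

Lemma br_hX_generic i j k l a b c : i != j -> k != l -> ~~ ((k == i) && (l == j)) ->
  ~~ ((k == j) && (l == i)) ->
  br (br (X i j a) (X j i b)) (X k l c) = X k l (hact i j a b k l c).
Proof.
case_ord3 i; case_ord3 j; case_ord3 k; case_ord3 l => // _ _ _ _.
all: rewrite br_leibnizl !br_XX // /brX /=.
all: rewrite ?(linN (br_linr _)) ?(linN (br_linl _)) ?(lin0 (br_linr _)) ?(lin0 (br_linl _)).
all: rewrite ?br_XX // /brX /=; norm_X.
Qed.

Lemma X_as_br k m l c : k != m -> m != l -> k != l -> X k l c = br (X k m c) (X m l 1).
Proof. by move=> nkm nml nkl; rewrite br_XX // /brX eqxx (negbTE nkl) mulr1. Qed.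

(* For (k, l) = (i, j) or (j, i) both brackets of the Leibniz identity fall
   in H, so X_kl c is first split through the third index m. *)
Lemma br_hX_diag i j m a b c : i != j -> m != i -> m != j ->
  br (br (X i j a) (X j i b)) (X i j c) = X i j (hact i j a b i j c) /\
  br (br (X i j a) (X j i b)) (X j i c) = X j i (hact i j a b j i c).
Proof.
move=> nij nmi nmj; have nji : j != i by rewrite eq_sym.
rewrite (X_as_br c _ nmj nij) ?(X_as_br c _ nmi nji) 1?eq_sym // !br_leibnizr.
move: nij nmi nmj {nji}; case_ord3 i; case_ord3 j; case_ord3 m => // _ _ _.
all: by split; rewrite !br_hX_generic // !br_XX // /brX /=; norm_X.
Qed.

Lemma br_hX i j k l a b c : i != j -> k != l ->
  br (br (X i j a) (X j i b)) (X k l c) = X k l (hact i j a b k l c).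
Proof.
move=> nij nkl; have [m nmi nmj] := third_index nij.
have [diag_ij diag_ji] := br_hX_diag a b c nij nmi nmj.
case: (boolP ((k == i) && (l == j))) => [/andP[/eqP-> /eqP->] //|not_ij].
case: (boolP ((k == j) && (l == i))) => [/andP[/eqP-> /eqP->] //|not_ji].
exact: br_hX_generic.
Qed.

Lemma br_Xh i j k l a b c : i != j -> k != l ->
  br (X k l c) (br (X i j a) (X j i b)) = - br (br (X i j a) (X j i b)) (X k l c).
Proof.
move=> nij nkl; rewrite br_hX //; move: nij nkl.
case_ord3 i; case_ord3 j; case_ord3 k; case_ord3 l => // _ _.
all: rewrite br_leibnizr !br_XX // /brX /=.
all: rewrite ?(linN (br_linr _)) ?(linN (br_linl _)) ?(lin0 (br_linr _)) ?(lin0 (br_linl _)).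
all: rewrite ?br_hX // ?br_XX // /brX /=; norm_X.
all: by rewrite ?opprD ?opprK addrC.
Qed.

Lemma bar_hact_mul i j a b k l c d :
  bar (hact i j a b k l c * d) = bar (a * b * c * d) *~ hact_coef i j k l.
Proof.
rewrite /hact /hact_coef !mulrDl !mulNr !mulrnAl.
rewrite !(linD bar_lin) !(linN bar_lin) !(linMn bar_lin).
rewrite (bar_mul_swap12 b a) (bar_mul_swap12 c a) (bar_mul_swap a c b).
rewrite (bar_mul_swap12 c b) (bar_mul_swap b c a) (bar_mul_swap12 b a).
by rewrite !pmulrn -!mulrzBr -mulrzDr.
Qed.

Lemma psi_hact_sym i j k l m n a b c d : i != j -> k != l -> m != n ->
  psi (br (br (X i j a) (X j i b)) (X m n d)) (X k l c)
  = psi (br (br (X i j a) (X j i b)) (X k l c)) (X m n d).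
Proof.
move=> nij nkl nmn; rewrite !br_hX // !psi_XXE //.
apply/eqP; rewrite -subr_eq0; apply/eqP; apply/ffunP => t.
rewrite !ffunE !bar_hact_mul [bar (a * b * d * c)]bar_mulAC -!mulrzA -mulrzBr.
exact/bar_mulz3/hinv_coef_dvd3.
Qed.

Lemma dpsi_HXX i j k l m n a b c d : i != j -> k != l -> m != n ->
  dpsi (br (X i j a) (X j i b)) (X k l c) (X m n d) = 0.
Proof.
move=> nij nkl nmn; rewrite /dpsi (psi_Hl _ (inH_gen _ _ _ _ nij)) add0r psi_hact_sym //.
exact: subrr.
Qed.

Lemma dpsi_XHX i j k l m n a b c d : i != j -> k != l -> m != n ->
  dpsi (X k l c) (br (X i j a) (X j i b)) (X m n d) = 0.
Proof.
move=> nij nkl nmn; rewrite /dpsi (psi_Hr _ (inH_gen _ _ _ _ nij)) addr0.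
rewrite br_Xh // (linN (psi_linl _)).
rewrite {1}br_hX // psi_XX_anti // -br_hX // psi_hact_sym //.
by rewrite opprK addNr.
Qed.

Lemma dpsi_XXH i j k l m n a b c d : i != j -> k != l -> m != n ->
  dpsi (X k l c) (X m n d) (br (X i j a) (X j i b)) = 0.
Proof.
move=> nij nkl nmn; rewrite /dpsi (psi_Hr _ (inH_gen _ _ _ _ nij)) subr0 !br_Xh //.
rewrite (linN (psi_linl _)) (linN (psi_linr _)) {1}br_hX // psi_XX_anti // -br_hX //.
by rewrite psi_hact_sym // opprK subrr.
Qed.

Lemma inH_br h1 h2 : inH br X h1 -> inH br X h2 -> inH br X (br h1 h2).
Proof.
move=> h1_in; elim: h1_in h2 => [i j a b nij | | u v _ IHu _ IHv | k u _ IHu] h2 h2_in.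
- elim: h2_in => [k l c d nkl | | u v _ IHu _ IHv | k u _ IHu].
  + have nlk : l != k by rewrite eq_sym.
    rewrite br_leibnizr !br_hX //; apply: inH_add; first exact: inH_gen.
    by rewrite -scaleN1r; apply/inH_scale/inH_gen.
  + by rewrite (lin0 (br_linr _)); apply: inH_zero.
  + by rewrite (linD (br_linr _)); apply: inH_add.
  + by rewrite (linZ (br_linr _)); apply: inH_scale.
- by rewrite (lin0 (br_linl _)); apply: inH_zero.
- by rewrite (linD (br_linl _)); apply: inH_add; [apply: IHu | apply: IHv].
- by rewrite (linZ (br_linl _)); apply/inH_scale/IHu.
Qed.

Lemma dpsi_inH12 h1 h2 z : inH br X h1 -> inH br X h2 -> dpsi h1 h2 z = 0.
Proof.
move=> h1_in h2_in; rewrite /dpsi (psi_Hl _ h1_in) (psi_Hr _ h2_in).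
by rewrite (psi_Hl _ (inH_br h1_in h2_in)) addr0 subrr.
Qed.

Lemma dpsi_inH13 h1 y h3 : inH br X h1 -> inH br X h3 -> dpsi h1 y h3 = 0.
Proof.
move=> h1_in h3_in; rewrite /dpsi (psi_Hl _ h1_in) (psi_Hl _ (inH_br h1_in h3_in)).
by rewrite (psi_Hr _ h3_in) addr0 subrr.
Qed.

Lemma dpsi_inH23 x h2 h3 : inH br X h2 -> inH br X h3 -> dpsi x h2 h3 = 0.
Proof.
move=> h2_in h3_in; rewrite /dpsi (psi_Hr _ (inH_br h2_in h3_in)) (psi_Hr _ h2_in).
by rewrite (psi_Hr _ h3_in) addr0 subrr.
Qed.

Lemma stl3_span_eq0 (V : lmodType K) (f : L -> V) : linear f ->
  (forall i j a, i != j -> f (X i j a) = 0) ->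
  (forall i j a b, i != j -> f (br (X i j a) (X j i b)) = 0) ->
  forall x, f x = 0.
Proof.
move=> f_lin fX fH x; have [h [a [h_in ->]]] := X_decomp.1 x.
have f_sum (I : Type) (r : seq I) (P : pred I) (F : I -> L) :
    (forall i, P i -> f (F i) = 0) -> f (\sum_(i <- r | P i) F i) = 0.
  move=> fF; apply: (big_ind (fun w => f w = 0)) => [|u v fu fv|i /fF //].
    exact: lin0.
  by rewrite (linD f_lin) fu fv addr0.
rewrite (linD f_lin) f_sum => [|i _]; last by apply: f_sum => j; apply: fX.
rewrite addr0; elim: h_in => [i j c d /fH //| |u v _ fu _ fv|k u _ fu]; first exact: lin0.
  by rewrite (linD f_lin) fu fv addr0.
by rewrite (linZ f_lin) fu scaler0.
Qed.

Lemma dpsi_linl y z : linear (fun x => dpsi x y z).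
Proof.
apply: linear_add_sub => k u v /=; first by rewrite psi_linl.
  by rewrite br_linl psi_linl.
by rewrite br_linl psi_linl.
Qed.

Lemma dpsi_linm x z : linear (fun y => dpsi x y z).
Proof.
apply: linear_add_sub => k u v /=; first by rewrite br_linl psi_linr.
  by rewrite psi_linr.
by rewrite br_linr psi_linl.
Qed.

Lemma dpsi_linr x y : linear (dpsi x y).
Proof.
apply: linear_add_sub => k u v /=; first by rewrite br_linr psi_linr.
  by rewrite br_linr psi_linl.
by rewrite psi_linr.
Qed.

Lemma dpsi_eq0 x y z : dpsi x y z = 0.
Proof.
apply: (stl3_span_eq0 (dpsi_linl y z)) x => [i j a nij | i j a b nij].
- apply: (stl3_span_eq0 (dpsi_linm _ z)) y => [k l c nkl | k l c d nkl].
  + apply: (stl3_span_eq0 (dpsi_linr _ _)) z => [m n d nmn | m n d e nmn].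
      exact: dpsi_XXX.
    exact: dpsi_XXH.
  apply: (stl3_span_eq0 (dpsi_linr _ _)) z => [m n e nmn | m n e f nmn].
    exact: dpsi_XHX.
  by apply: dpsi_inH23; apply: inH_gen.
apply: (stl3_span_eq0 (dpsi_linm _ z)) y => [k l c nkl | k l c d nkl].
  apply: (stl3_span_eq0 (dpsi_linr _ _)) z => [m n d nmn | m n d e nmn].
    exact: dpsi_HXX.
  by apply: dpsi_inH13; apply: inH_gen.
by apply: dpsi_inH12; apply: inH_gen.
Qed.
End CocycleIdentity.

Theorem lemma4p2 (K : comNzRingType) (R : algType K)
    (L : lmodType K) (br : L -> L -> L) (X : 'I_3 -> 'I_3 -> R -> L)
    (R3 : lmodType K) (bar : R -> R3)
    (psi : L -> L -> {ffun U_index -> R3}) :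
  free_with_basis_containing_one R ->
  is_stl3 br X ->
  stl3_decomposition br X ->
  is_R3_quotient bar ->
  (forall x (k : K) u v, psi x (k *: u + v) = k *: psi x u + psi x v) ->
  (forall y (k : K) u v, psi (k *: u + v) y = k *: psi u y + psi v y) ->
  (forall i j k l a b, i != j -> k != l ->
      psi (X i j a) (X k l b) = psi_gen bar i j k l a b) ->
  (forall h y, inH br X h -> psi h y = 0) ->
  (forall x h, inH br X h -> psi x h = 0) ->
  forall x y z : L, psi x (br y z) + psi (br x z) y - psi (br x y) z = 0.
Proof.
move=> _ [br_leib X_rel _] X_decomp bar_quot psi_linr psi_linl psi_XX psi_Hl psi_Hr x y z.
exact: (dpsi_eq0 br_leib X_rel X_decomp bar_quot psi_linr psi_linl psi_XX psi_Hl psi_Hr).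
Qed.
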